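(* Let $e$ be a well-typed muse-$\mathsf{MATLANG}$ expression, and let $\texttt{SRing}$ be the set of semirings used by $e$. Let $T$ be a semiring in $\texttt{SRing}$ such that for all $R \in \texttt{SRing}$ we have $|R| \leq |T|$. Then there exists an expression in dec-$\mathsf{MATLANG}$ defined over $T$ that is equivalent to $e$.
   Context: dec-$\mathsf{MATLANG}$ is a matrix language over a fixed semiring with a repertoire $\Omega$ of pointwise functions, with expressions: matrix variables, transpose $e^T$, one-vector $\mathbf{1}(e)$, $\mathrm{diag}(e)$, matrix multiplication $e_1\cdot e_2$, pointwise application $\mathrm{apply}[f](e_1,\ldots,e_k)$; the operation $\mathrm{pickAny}(e)$, which keeps in each row the nonzero entry of minimal column index and sets all other entries to zero; and a simultaneous-induction loop $\texttt{for}\,\{M_1 := e_1',\ldots,M_m := e_m'\}(e_d,e_1,\ldots,e_m)$ that initializes each $M_i$ to $e_i$, then simultaneously updates all $M_i$ to $e_i'$ exactly $n$ times where $e_d$ evaluates to an $n\times 1$ vector, returning the final $M_1$. muse-$\mathsf{MATLANG}$ is dec-$\mathsf{MATLANG}$ where a type is a triple $s_1\times s_2\times r$ with $r$ a semiring from a nonempty finite set $\texttt{SRing}$; the repertoire $\Omega$ consists of functions $f: R_1\times\cdots\times R_k\to R_o$ with possibly distinct semirings (allowing casts between semirings); matrix multiplication requires both operands over the same semiring, and every operation (addition, multiplication, zero, one) uses the semiring associated with its input. Equivalence is meant via injective encodings $\mathrm{enc}_R: R\to T$ with retractions $\mathrm{dec}_R$: the dec-$\mathsf{MATLANG}$ expression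 $\hat e$ satisfies $[\![e]\!]_{\mathcal I} = \mathrm{dec}_R([\![\hat e]\!]_{\hat{\mathcal I}})$, where $\hat{\mathcal I}$ encodes each input matrix via $\mathrm{enc}_R$. *)

From HB Require Import structures.
From mathcomp Require Import all_boot all_order all_algebra.
Set Implicit Arguments. Unset Strict Implicit. Unset Printing Implicit Defensive.
Import GRing.Theory.
Local Open Scope ring_scope.

Inductive sdim : Type := dOne | dSym of nat.

(* A type s1 x s2 x r, with r an index into the family of semirings. *)
Definition ty (I : Type) : Type := (sdim * sdim * I)%type.

(* Pointwise functions may be arbitrary functions R_1 x .. x R_k -> R_o
   (k >= 1). *)
Inductive mexpr (I : Type) (R : I -> pzSemiRingType) (V : Type)
    (sch : V -> ty I) : ty I -> Type :=
| EVar (x : V) : mexpr R sch (sch x)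
| ETr (a b : sdim) (r : I) : mexpr R sch (a, b, r) -> mexpr R sch (b, a, r)
| EOne (a b : sdim) (r : I) : mexpr R sch (a, b, r) -> mexpr R sch (a, dOne, r)
| EDiag (a : sdim) (r : I) : mexpr R sch (a, dOne, r) -> mexpr R sch (a, a, r)
| EMul (a b c : sdim) (r : I) :
    mexpr R sch (a, b, r) -> mexpr R sch (b, c, r) -> mexpr R sch (a, c, r)
| EApply (a b : sdim) (k : nat) (rs : 'I_k.+1 -> I) (ro : I)
    (f : (forall j : 'I_k.+1, R (rs j)) -> R ro)
    (args : forall j : 'I_k.+1, mexpr R sch (a, b, rs j)) : mexpr R sch (a, b, ro)
| EPick (a b : sdim) (r : I) : mexpr R sch (a, b, r) -> mexpr R sch (a, b, r)
| EFor (a : sdim) (r0 : I) (m : nat) (xs : 'I_m.+1 -> V) (Hxs : injective xs)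
    (ed : mexpr R sch (a, dOne, r0))
    (init : forall j : 'I_m.+1, mexpr R sch (sch (xs j)))
    (upd : forall j : 'I_m.+1, mexpr R sch (sch (xs j))) :
    mexpr R sch (sch (xs ord0)).

Definition pickAny (K : pzSemiRingType) (p q : nat) (A : 'M[K]_(p, q)) : 'M[K]_(p, q) :=
  \matrix_(i, j) (if (A i j != 0) && [forall k : 'I_q, (k < j)%N ==> (A i k == 0)]
                  then A i j else 0).

Section Semantics.
Variables (I : Type) (R : I -> pzSemiRingType) (V : eqType) (sch : V -> ty I).
(* An instance assigns a natural number to each named size symbol
   (the symbol 1 is always interpreted by 1) ... *)
Variable D : nat -> nat.

Definition dimv (d : sdim) : nat := match d with dOne => 1%N | dSym s => D s end.

Definition mat (t : ty I) : Type := 'M[R t.2]_(dimv t.1.1, dimv t.1.2).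

Definition env : Type := forall x : V, mat (sch x).

Definition upd1 (E : env) (x : V) (M : mat (sch x)) : env :=
  fun y => match @eqP V x y with
           | ReflectT p => eq_rect x (fun z => mat (sch z)) M y p
           | ReflectF _ => E y
           end.

Definition setall (E : env) (m : nat) (xs : 'I_m.+1 -> V)
    (st : forall j : 'I_m.+1, mat (sch (xs j))) : env :=
  foldr (fun j E' => upd1 E' (st j)) E (enum 'I_m.+1).

Fixpoint eval (E : env) (t : ty I) (e : mexpr R sch t) {struct e} : mat t :=
  match e in mexpr _ _ t return mat t with
  | EVar x => E x
  | ETr _ _ _ e1 => (eval E e1)^T
  | EOne a _ r _ => const_mx (1 : R r)
  | EDiag a r e1 =>
      let v := eval E e1 in \matrix_(i, j) (if i == j then v i ord0 else 0)
  | EMul _ _ _ _ e1 e2 => eval E e1 *m eval E e2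
  | EApply a b k rs ro f args =>
      \matrix_(i, j) f (fun l => eval E (args l) i j)
  | EPick _ _ _ e1 => pickAny (eval E e1)
  | EFor a _ m xs _ _ init upd =>
      (iter (dimv a)
         (fun st : (forall j : 'I_m.+1, mat (sch (xs j))) =>
            fun j => eval (setall E st) (upd j))
         (fun j => eval E (init j))) ord0
  end.
End Semantics.

(* dec-MATLANG over a single semiring T: the instance with one semiring. *)
Definition Rdec (T : pzSemiRingType) : unit -> pzSemiRingType := fun _ => T.

(* Variables of the translated expression: inl x is the input variable x of
   the original expression; inr y are auxiliary variables with schema aux. *)
Definition dsch (I : Type) (sch : nat -> ty I) (aux : nat -> ty unit)
    (v : (nat + nat)%type) : ty unit :=
  match v with inl x => ((sch x).1.1, (sch x).1.2, tt) | inr y => aux y end.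

Definition encenv (I : Type) (R : I -> pzSemiRingType) (T : pzSemiRingType)
    (enc : forall i, R i -> T) (sch : nat -> ty I) (aux : nat -> ty unit)
    (D : nat -> nat) (E : env R sch D)
    (Eaux : forall y : nat, mat (Rdec T) D (aux y)) :
    env (Rdec T) (dsch sch aux) D :=
  fun v => match v as v return mat (Rdec T) D (dsch sch aux v) with
           | inl x => map_mx (enc (sch x).2) (E x)
           | inr y => Eaux y
           end.

From Pilot Require Import Defs.
From HB Require Import structures.
From mathcomp Require Import all_boot all_order all_algebra.
From Stdlib Require Import FunctionalExtensionality ClassicalEpsilon.
Set Implicit Arguments. Unset Strict Implicit. Unset Printing Implicit Defensive.
Import GRing.Theory.
Local Open Scope ring_scope.

(* Choose injections enc_i : R_i -> T with retractions dec_i and translate e into an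
   expression over T whose value is, entrywise, the encoding of the value of e.
   Variables, transposition and loops commute with the encoding, a pointwise function f
   becomes enc o f o dec, and the constants 0 and 1 produced by the one-vector, diag and
   pickAny are re-encoded pointwise.  Matrix multiplication is the one operation that
   uses the semiring R_r globally: it is simulated by a loop over the inner dimension
   that accumulates A[i,k] B[k,j] with the operations of R_r applied pointwise through
   enc/dec, the current index k being tracked by a 0/1 mask from which pickAny extracts
   the unit vector e_k.  When T is the trivial semiring every encoding is constant and
   the claim is immediate. *)

Lemma iter_ind (X : Type) (P : nat -> X -> Prop) (f : X -> X) n x :
  P 0%N x -> (forall k y, (k < n)%N -> P k y -> P k.+1 (f y)) -> P n (iter n f x).
Proof.
move=> P0 PS; suff: forall k, (k <= n)%N -> P k (iter k f x) by apply.
by elim=> // k IH kn; apply: PS => //; apply: IH; apply: ltnW.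
Qed.

Lemma inj_retraction (A B : Type) (a0 : A) (f : A -> B) :
  injective f -> exists g : B -> A, cancel f g.
Proof.
move=> f_inj; exists (fun y => epsilon (inhabits a0) (fun x => f x = y)) => x.
by apply: f_inj; apply: (epsilon_spec (inhabits a0) (fun x' => f x' = f x)); exists x.
Qed.

Lemma inj_retractions (I : Type) (A : I -> Type) (B : Type) (a0 : forall i, A i) :
  (forall i, exists f : A i -> B, injective f) ->
  exists (f : forall i, A i -> B) (g : forall i, B -> A i), forall i, cancel (f i) (g i).
Proof.
move=> f_inj.
have fgP i : exists fg : (A i -> B) * (B -> A i), cancel fg.1 fg.2.
  by have [f /(inj_retraction (a0 i)) [g fK]] := f_inj i; exists (f, g).
pose fg i := proj1_sig (constructive_indefinite_description _ (fgP i)).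
exists (fun i => (fg i).1), (fun i => (fg i).2) => i.
exact: proj2_sig (constructive_indefinite_description _ (fgP i)).
Qed.

Section Environments.
Variables (I : Type) (R : I -> pzSemiRingType) (V : eqType) (sch : V -> ty I) (D : nat -> nat).

Lemma upd1_same (E : env R sch D) x (M : mat R D (sch x)) : upd1 E M x = M.
Proof. by rewrite /upd1; case: eqP => // p; rewrite (eq_irrelevance p (erefl x)). Qed.

Lemma upd1_other (E : env R sch D) x (M : mat R D (sch x)) y : x != y -> upd1 E M y = E y.
Proof. by rewrite /upd1; case: eqP. Qed.

Lemma setall_in (E : env R sch D) m (xs : 'I_m.+1 -> V) (st : forall j, mat R D (sch (xs j))) :
  injective xs -> forall j, setall E st (xs j) = st j.
Proof.
move=> xs_inj j; rewrite /setall.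
have : j \in enum 'I_m.+1 by rewrite mem_enum.
elim: (enum 'I_m.+1) => //= i l IH; rewrite inE.
have [/xs_inj eij _ | ne /predU1P [eji | jl]] := eqVneq (xs i) (xs j).
- by subst j; apply: upd1_same.
- by rewrite eji eqxx in ne.
- by rewrite upd1_other // IH.
Qed.

Lemma setall_out (E : env R sch D) m (xs : 'I_m.+1 -> V) (st : forall j, mat R D (sch (xs j))) y :
  (forall j, xs j != y) -> setall E st y = E y.
Proof. by move=> xs_y; rewrite /setall; elim: (enum 'I_m.+1) => //= i l IH; rewrite upd1_other. Qed.
End Environments.

Section DecCombinators.
Variables (T : pzSemiRingType) (V : eqType) (sch : V -> ty unit).
Local Notation DE := (mexpr (Rdec T) sch).

Definition emap a b (f : T -> T) (X : DE (a, b, tt)) : DE (a, b, tt) :=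
  EApply (k := 0) (rs := fun _ => tt) (ro := tt) (fun v => f (v ord0)) (fun _ => X).

Definition emap2 a b (f : T -> T -> T) (X Y : DE (a, b, tt)) : DE (a, b, tt) :=
  EApply (k := 1) (rs := fun _ => tt) (ro := tt) (fun v => f (v ord0) (v ord_max))
    (fun j => if j == ord0 then X else Y).

Definition ecast t1 t2 (p : t1 = t2) (e : DE t1) : DE t2 := eq_rect t1 DE e t2 p.

Definition pair_vars (v1 v2 : V) (j : 'I_2) : V := if nat_of_ord j is 0 then v1 else v2.

Lemma pair_vars_inj v1 v2 : v1 != v2 -> injective (pair_vars v1 v2).
Proof.
move=> v12 [[|[|i]] Hi] [[|[|j]] Hj] //= e; apply: val_inj => //.
all: by rewrite /pair_vars /= in e; rewrite e eqxx in v12.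
Qed.

Definition pair_fam v1 v2 (x1 : DE (sch v1)) (x2 : DE (sch v2)) :
    forall j, DE (sch (pair_vars v1 v2 j)) :=
  fun j => match j with
  | @Ordinal _ n H =>
    (match n return forall H0 : (n < 2)%N, DE (sch (pair_vars v1 v2 (Ordinal H0))) with
     | 0 => fun _ => x1 | _.+1 => fun _ => x2 end) H
  end.

Variable D : nat -> nat.
Implicit Type E : env (Rdec T) sch D.

Lemma eval_emap E a b f (X : DE (a, b, tt)) : eval E (emap f X) = map_mx f (eval E X).
Proof. by apply/matrixP => i j; rewrite !mxE. Qed.

Lemma eval_emap2 E a b f (X Y : DE (a, b, tt)) :
  eval E (emap2 f X Y) = map2_mx f (eval E X) (eval E Y).
Proof. by apply/matrixP => i j; rewrite !mxE. Qed.

Lemma eval_ecast E t1 t2 (p : t1 = t2) (e : DE t1) :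
  eval E (ecast p e) = eq_rect t1 (mat (Rdec T) D) (eval E e) t2 p.
Proof. by case: t2 / p. Qed.

Lemma eval_for2_ind E a r0 v1 v2 (H : injective (pair_vars v1 v2)) (ed : DE (a, dOne, r0))
    (init1 body1 : DE (sch v1)) (init2 body2 : DE (sch v2))
    (P : nat -> mat (Rdec T) D (sch v1) -> mat (Rdec T) D (sch v2) -> Prop) :
  P 0%N (eval E init1) (eval E init2) ->
  (forall k (st : forall j, mat (Rdec T) D (sch (pair_vars v1 v2 j))), (k < Defs.dimv D a)%N ->
     P k (st ord0) (st ord_max) ->
     P k.+1 (eval (setall E st) body1) (eval (setall E st) body2)) ->
  exists M2, P (Defs.dimv D a)
    (eval E (EFor H ed (pair_fam init1 init2) (pair_fam body1 body2))) M2.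
Proof.
move=> P0 PS.
pose step (st : forall j, mat (Rdec T) D (sch (pair_vars v1 v2 j))) j :=
  eval (setall E st) (pair_fam body1 body2 j).
pose st0 j := eval E (pair_fam init1 init2 j).
exists (iter (Defs.dimv D a) step st0 ord_max).
pose Q k (st : forall j, mat (Rdec T) D (sch (pair_vars v1 v2 j))) := P k (st ord0) (st ord_max).
exact: (@iter_ind _ Q step (Defs.dimv D a) st0 P0 PS).
Qed.
End DecCombinators.

Lemma pickAny_map (K L : pzSemiRingType) (f : K -> L) p q (A : 'M[K]_(p, q)) :
  (forall x, (f x == 0) = (x == 0)) -> pickAny (map_mx f A) = map_mx f (pickAny A).
Proof.
move=> f0; have f00 : f 0 = 0 by apply/eqP; rewrite f0.
apply/matrixP => i j; rewrite !mxE f0.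
under eq_forallb => k do rewrite mxE f0.
by case: ifP; rewrite ?f00.
Qed.

Definition partial_mulmx (K : pzSemiRingType) m n p (A : 'M[K]_(m, n)) (B : 'M[K]_(n, p)) k :=
  \matrix_(i, j) \sum_(l < n | (l < k)%N) A i l * B l j.

Lemma partial_mulmx0 (K : pzSemiRingType) m n p (A : 'M[K]_(m, n)) (B : 'M[K]_(n, p)) :
  partial_mulmx A B 0 = 0.
Proof. by apply/matrixP => i j; rewrite !mxE big_pred0. Qed.

Lemma partial_mulmxS (K : pzSemiRingType) m n p (A : 'M[K]_(m, n)) (B : 'M[K]_(n, p))
    (k : 'I_n) i j :
  partial_mulmx A B k.+1 i j = A i k * B k j + partial_mulmx A B k i j.
Proof.
rewrite !mxE (bigD1 k) ?ltnSn //=; congr (_ + _); apply: eq_bigl => l.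
by rewrite ltnS ltn_neqAle -val_eqE andbC.
Qed.

Lemma partial_mulmx_full (K : pzSemiRingType) m n p (A : 'M[K]_(m, n)) (B : 'M[K]_(n, p)) :
  partial_mulmx A B n = A *m B.
Proof. by apply/matrixP => i j; rewrite !mxE; apply: eq_bigl => l; rewrite ltn_ord. Qed.

Section Masks.
Variable T : pzSemiRingType.
Hypothesis T1 : (1 : T) != 0.

Definition suffix_mask n k : 'cV[T]_n := \col_l (if (l < k)%N then 0 else 1).

Lemma pickAny_suffix_mask n (k : 'I_n) : pickAny (suffix_mask n k)^T = delta_mx 0 k.
Proof.
apply/matrixP => i l; rewrite !mxE (ord1 i) eqxx -val_eqE /=.
have [lk | kl | ->] := ltngtP l k.
- by rewrite eqxx.
- rewrite T1 /=; case: forallP => // /(_ k); rewrite !mxE kl ltnn /=.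
  by rewrite (negbTE T1).
- rewrite T1 /=; case: forallP => // -[k']; apply/implyP => k'l.
  by rewrite !mxE k'l.
Qed.

Lemma suffix_mask_step n (k : 'I_n) :
  map2_mx (fun x y => if y == 0 then x else 0) (suffix_mask n k) (delta_mx k 0 : 'cV[T]_n) =
  suffix_mask n k.+1.
Proof.
apply/matrixP => l i; rewrite !mxE (ord1 i) eqxx andbT ltnS.
have [->|nlk] := eqVneq l k; first by rewrite leqnn (negbTE T1).
by rewrite eqxx ltn_neqAle val_eqE nlk.
Qed.

Lemma mulmx_delta_col m n p (M : 'M[T]_(m, n)) (k : 'I_n) :
  M *m delta_mx k 0 *m (const_mx 1 : 'M_(p, 1))^T = \matrix_(i, _) M i k.
Proof. by apply/matrixP => i j; rewrite -colE !mxE big_ord1 !mxE mulr1. Qed.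

Lemma mulmx_delta_row m n p (M : 'M[T]_(n, p)) (k : 'I_n) :
  (const_mx 1 : 'M_(m, 1)) *m (delta_mx 0 k *m M) = \matrix_(_, j) M k j.
Proof. by apply/matrixP => i j; rewrite -rowE !mxE big_ord1 !mxE mul1r. Qed.
End Masks.

Definition sdim_code (d : sdim) : nat := if d is dSym s then s.+1 else 0.
Definition sdim_decode (n : nat) : sdim := if n is s.+1 then dSym s else dOne.

Lemma sdim_codeK : cancel sdim_code sdim_decode. Proof. by case. Qed.

(* The auxiliary variable [aux_var k a c] carries its type (a, c) in its index, so the
   single schema [aux_sch] serves every auxiliary variable of every multiplication. *)
Definition aux_sch (n : nat) : ty unit :=
  if @unpickle (nat * nat * nat)%type n is Some (_, p, q)
  then (sdim_decode p, sdim_decode q, tt) else (dOne, dOne, tt).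

Definition aux_var (k : nat) (a c : sdim) : nat := pickle (k, sdim_code a, sdim_code c).

Lemma aux_var_sch k a c : aux_sch (aux_var k a c) = (a, c, tt).
Proof. by rewrite /aux_sch /aux_var pickleK !sdim_codeK. Qed.

Lemma aux_var_neq a b c d : inr (aux_var 0 a b) != inr (aux_var 1 c d) :> (nat + nat)%type.
Proof. by apply/eqP => -[/(pcan_inj pickleK)]. Qed.

Section Translation.
Variables (I : Type) (R : I -> pzSemiRingType) (sch : nat -> ty I) (T : pzSemiRingType)
  (enc : forall i, R i -> T) (dec : forall i, T -> R i).

Local Notation sch' := (dsch sch aux_sch).
Local Notation DE := (mexpr (Rdec T) sch').
Arguments enc : clear implicits.

Definition aux_expr k a c : DE (a, c, tt) :=
  ecast (aux_var_sch k a c) (EVar (Rdec T) sch' (inr (aux_var k a c))).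

Definition aux_init k a c (X : DE (a, c, tt)) : DE (sch' (inr (aux_var k a c))) :=
  ecast (esym (aux_var_sch k a c)) X.

Definition tr_const r (x : R r) a b (X : DE (a, b, tt)) : DE (a, b, tt) :=
  emap (fun _ => enc r x) X.

Definition zero_unless r (x y : T) : T := if y == 0 then enc r 0 else x.

Definition lift2 r (op : R r -> R r -> R r) (x y : T) : T := enc r (op (dec r x) (dec r y)).

Definition tr_diag r a (X : DE (a, dOne, tt)) : DE (a, a, tt) :=
  emap2 (zero_unless r) (EDiag X) (EDiag (EOne X)).

Definition tr_pick r a b (X : DE (a, b, tt)) : DE (a, b, tt) :=
  emap2 (zero_unless r) X (EPick (emap (fun y => if dec r y == 0 then 0 else 1) X)).

(* Loop over the inner index k with state (acc, rest): rest is the 0/1 column mask of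
   the indices >= k, so pickAny of its transpose is e_k; the body adds A[i,k] B[k,j]
   to acc and clears entry k of rest. *)
Definition tr_mul r a b c (A : DE (a, b, tt)) (B : DE (b, c, tt)) : DE (a, c, tt) :=
  let acc := aux_expr 0 a c in
  let rest := aux_expr 1 b dOne in
  let e_k := ETr (EPick (ETr rest)) in
  let A_k := EMul (EMul A e_k) (ETr (EOne (ETr B))) in
  let B_k := EMul (EOne A) (EMul (ETr e_k) B) in
  ecast (aux_var_sch 0 a c)
    (EFor (pair_vars_inj (aux_var_neq a c b dOne)) (EOne (ETr A))
       (pair_fam (aux_init 0 (tr_const (0 : R r) (EMul A B))) (aux_init 1 (EOne (ETr A))))
       (pair_fam (aux_init 0 (emap2 (@lift2 r +%R) (emap2 (@lift2 r *%R) A_k B_k) acc))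
                 (aux_init 1 (emap2 (fun x y => if y == 0 then x else 0) rest e_k)))).

Fixpoint translate t (e : mexpr R sch t) : DE (t.1.1, t.1.2, tt) :=
  match e in mexpr _ _ t return DE (t.1.1, t.1.2, tt) with
  | EVar x => EVar (Rdec T) sch' (inl x)
  | ETr _ _ _ e1 => ETr (translate e1)
  | EOne _ _ r e1 => tr_const (1 : R r) (EOne (translate e1))
  | EDiag _ r e1 => tr_diag r (translate e1)
  | EMul _ _ _ r e1 e2 => tr_mul r (translate e1) (translate e2)
  | EApply _ _ k rs ro f args =>
      EApply (k := k) (rs := fun _ => tt) (ro := tt)
        (fun v => enc ro (f (fun l => dec (rs l) (v l)))) (fun l => translate (args l))
  | EPick _ _ r e1 => tr_pick r (translate e1)
  | EFor _ _ m xs xs_inj ed init upd =>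
      EFor (xs := fun j => inl (xs j)) (inj_comp (@inl_inj _ _) xs_inj) (translate ed)
        (fun j => translate (init j)) (fun j => translate (upd j))
  end.

Hypothesis encK : forall i, cancel (enc i) (dec i).
Hypothesis T1 : (1 : T) != 0.

Variable D : nat -> nat.

Definition encodes (E : env R sch D) (E' : env (Rdec T) sch' D) :=
  forall x, E' (inl x) = map_mx (enc (sch x).2) (E x).

Definition aux_val k a c (M : mat (Rdec T) D (sch' (inr (aux_var k a c)))) :
    'M[T]_(Defs.dimv D a, Defs.dimv D c) :=
  eq_rect _ (mat (Rdec T) D) M _ (aux_var_sch k a c).

Lemma eval_aux_expr E' k a c : eval E' (aux_expr k a c) = aux_val (E' (inr (aux_var k a c))).
Proof. exact: eval_ecast. Qed.

Lemma aux_val_init E' k a c (X : DE (a, c, tt)) : aux_val (eval E' (aux_init k X)) = eval E' X.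
Proof. by rewrite /aux_val eval_ecast; exact: (rew_opp_r (mat (Rdec T) D) (aux_var_sch k a c)). Qed.

Lemma encodes_setall_aux E E' m (xs : 'I_m.+1 -> nat + nat)
    (st : forall j, mat (Rdec T) D (sch' (xs j))) :
  (forall j x, xs j != inl x) -> encodes E E' -> encodes E (setall E' (xs := xs) st).
Proof. by move=> xs_aux EE' x; rewrite setall_out. Qed.

Lemma encodes_setall E E' m (xs : 'I_m.+1 -> nat) (st : forall j, mat R D (sch (xs j)))
    (st' : forall j, mat (Rdec T) D (sch' (inl (xs j)))) :
  encodes E E' -> (forall j, st' j = map_mx (enc _) (st j)) ->
  encodes (setall E st) (setall E' (xs := fun j => inl (xs j)) st').
Proof.
move=> EE' st'E x; rewrite /setall; elim: (enum _) => [|i l IH] /=; first exact: EE'.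
have [<- | ne] := eqVneq (xs i) x; first by rewrite !upd1_same st'E.
by rewrite !upd1_other // (contra _ ne) // => /eqP [->].
Qed.

Lemma eval_tr_diag E' r a (X : DE (a, dOne, tt)) (v : 'cV[R r]_(Defs.dimv D a)) :
  eval E' X = map_mx (enc r) v ->
  eval E' (tr_diag r X) = map_mx (enc r) (\matrix_(i, j) (if i == j then v i ord0 else 0)).
Proof.
move=> Xv; rewrite eval_emap2 /= Xv; apply/matrixP => i j; rewrite !mxE /zero_unless.
by case: (i == j); rewrite ?eqxx ?(negbTE T1).
Qed.

Lemma eval_tr_pick E' r a b (X : DE (a, b, tt)) (A : 'M[R r]_(Defs.dimv D a, Defs.dimv D b)) :
  eval E' X = map_mx (enc r) A -> eval E' (tr_pick r X) = map_mx (enc r) (pickAny A).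
Proof.
move=> XA; rewrite eval_emap2 /= XA.
rewrite (_ : \matrix_(i, j) _ = map_mx (fun x => if x == 0 then 0 else 1) A); last first.
  by apply/matrixP => i j; rewrite !mxE encK.
rewrite pickAny_map; last by move=> x; case: (x == 0); rewrite ?eqxx ?(negbTE T1).
apply/matrixP => i j; rewrite !mxE /zero_unless.
have [-> | Anz] := eqVneq (A i j) 0; first by rewrite !eqxx.
by case: [forall _, _]; rewrite /= ?eqxx // (negbTE Anz) (negbTE T1).
Qed.

Lemma eval_tr_mul E E' r a b c (A' : DE (a, b, tt)) (B' : DE (b, c, tt))
    (A : 'M[R r]_(Defs.dimv D a, Defs.dimv D b)) (B : 'M[R r]_(Defs.dimv D b, Defs.dimv D c)) :
  encodes E E' ->
  (forall E'', encodes E E'' -> eval E'' A' = map_mx (enc r) A) ->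
  (forall E'', encodes E E'' -> eval E'' B' = map_mx (enc r) B) ->
  eval E' (tr_mul r A' B') = map_mx (enc r) (A *m B).
Proof.
move=> EE' evA evB; rewrite /tr_mul eval_ecast -partial_mulmx_full.
set n := Defs.dimv D b.
pose P k (acc : mat (Rdec T) D (sch' (inr (aux_var 0 a c))))
         (rest : mat (Rdec T) D (sch' (inr (aux_var 1 b dOne)))) :=
  aux_val acc = map_mx (enc r) (partial_mulmx A B k) /\ aux_val rest = suffix_mask T n k.
set loop := EFor _ _ _ _.
suff [rest []] : exists rest, P n (eval E' loop) rest by [].
apply: eval_for2_ind => [|k st kn [acc_k rest_k]].
  split; rewrite aux_val_init.
    by rewrite eval_emap partial_mulmx0; apply/matrixP => i j; rewrite !mxE.
  by apply/matrixP => l j; rewrite !mxE ltn0.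
set E2 := setall E' st.
have E2E : encodes E E2 by apply: encodes_setall_aux => // -[[|[|j]] ?].
have xs_inj := pair_vars_inj (aux_var_neq a c b dOne).
have accE : aux_val (E2 (inr (aux_var 0 a c))) = map_mx (enc r) (partial_mulmx A B k).
  by rewrite -acc_k; congr aux_val; exact: (setall_in _ _ xs_inj ord0).
have restE : aux_val (E2 (inr (aux_var 1 b dOne))) = suffix_mask T n k.
  by rewrite -rest_k; congr aux_val; exact: (setall_in _ _ xs_inj ord_max).
pose k' := Ordinal kn.
have e_kE : (pickAny (eval E2 (aux_expr 1 b dOne))^T)^T = delta_mx k' 0.
  by rewrite eval_aux_expr restE (pickAny_suffix_mask T1 k') trmx_delta.
split; rewrite aux_val_init !eval_emap2 /= e_kE eval_aux_expr.
  rewrite accE (evA _ E2E) (evB _ E2E) trmx_delta mulmx_delta_col mulmx_delta_row.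
  by apply/matrixP => i j; rewrite [RHS]mxE (partial_mulmxS _ _ k') !mxE /lift2 !encK.
by rewrite restE; exact: (suffix_mask_step T1 k').
Qed.

Lemma translate_sound t (e : mexpr R sch t) E E' :
  encodes E E' -> eval E' (translate e) = map_mx (enc t.2) (eval E e).
Proof.
elim: e E E'.
- by move=> x E E'; apply.
- by move=> a b r e1 IH E E' EE' /=; rewrite (IH E) // map_trmx.
- by move=> a b r e1 _ E E' _; rewrite eval_emap; apply/matrixP => i j; rewrite !mxE.
- by move=> a r e1 IH E E' EE'; apply: eval_tr_diag; apply: IH.
- move=> a b c r e1 IH1 e2 IH2 E E' EE'.
  by apply: (eval_tr_mul EE') => E''; [exact: IH1 | exact: IH2].
- move=> a b k rs ro f args IH E E' EE' /=; apply/matrixP => i j; rewrite !mxE.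
  congr (enc ro (f _)); apply: functional_extensionality_dep => l.
  by rewrite (IH l E) // mxE encK.
- by move=> a b r e1 IH E E' EE'; apply: eval_tr_pick; apply: IH.
- move=> a r0 m xs xs_inj ed _ init IHinit upd IHupd E E' EE'.
  rewrite /=; elim: (Defs.dimv D a) (ord0 : 'I_m.+1) => [|n IH] j /=; first exact: IHinit.
  by apply: IHupd; apply: encodes_setall.
Qed.

End Translation.

Lemma eq_mx_trivial_codomain (K L : pzSemiRingType) (f : K -> L) m n (A B : 'M[K]_(m, n)) :
  (1 : L) = 0 -> injective f -> A = B.
Proof.
move=> L10 f_inj; apply/matrixP => i j; apply: f_inj.
by rewrite -[LHS]mulr1 -[RHS]mulr1 L10 !mulr0.
Qed.

Unset Implicit Arguments.
Close Scope ring_scope.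

Theorem theorem3 (I : finType) (R : I -> pzSemiRingType) (sch : nat -> ty I)
    (t : I) (a b : sdim) (r : I) (e : mexpr R sch (a, b, r))
    (Hcard : forall i : I, exists f : R i -> R t, injective f) :
  exists (enc : forall i : I, R i -> R t) (dec : forall i : I, R t -> R i),
    (forall i, injective (enc i)) /\ (forall i, cancel (enc i) (dec i)) /\
    exists (aux : nat -> ty unit)
           (e' : mexpr (Rdec (R t)) (dsch sch aux) (a, b, tt)),
      forall (D : nat -> nat) (E : env R sch D)
             (Eaux : forall y : nat, mat (Rdec (R t)) D (aux y)),
        eval E e = map_mx (dec r) (eval (encenv enc E Eaux) e').
Proof.
have [enc [dec encK]] := inj_retractions (fun i => 0%R : R i) Hcard.
have encI i : injective (enc i) := can_inj (encK i).
exists enc, dec; do 2!split => //.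
exists aux_sch, (translate enc dec e) => D E Eaux.
have [T0 | T1] := eqVneq (1 : R t)%R 0%R; first exact: eq_mx_trivial_codomain T0 (encI r).
rewrite (translate_sound encK T1 e (_ : encodes enc E (encenv enc E Eaux))) // -map_mx_comp.
by apply/matrixP => i j; rewrite !mxE /= encK.
Qed.
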